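(* Let $n_\text{in}, n_\text{out} \ge 1$, let $\mathbf{W}\in\mathbb{R}^{n_\text{out}\times n_\text{in}}$, $\mathbf{b}\in\mathbb{R}^{n_\text{out}}$, $\mathbf{c}\in\mathbb{R}^{n_\text{in}}$, and let $\mathbf{U}=[\mathbf{u}_1\,\mathbf{u}_2\,\ldots\,\mathbf{u}_{n_\text{in}}]\in\mathbb{R}^{n_\text{in}\times n_\text{in}}$. Consider the input parallelotope $\mathcal{P}(\mathbf{U})=\{\mathbf{c}+\sum_{j=1}^{n_\text{in}}\lambda_j\mathbf{u}_j:\lambda\in[0,1]^{n_\text{in}}\}$ and its pre-activation image $\mathcal{P}(\mathbf{V})=\{\mathbf{W}\mathbf{x}+\mathbf{b}:\mathbf{x}\in\mathcal{P}(\mathbf{U})\}$, where $\mathbf{V}=\mathbf{W}\mathbf{U}=[\mathbf{v}_1\,\ldots\,\mathbf{v}_{n_\text{in}}]$. Fix $r\in[0,1]$ and split $\mathcal{P}(\mathbf{U})$ along $\mathbf{u}_1$ into the ``left'' parallelotope $\mathcal{P}(\mathbf{U}^L)=\{\mathbf{c}+\lambda_1 r\mathbf{u}_1+\sum_{j\ge2}\lambda_j\mathbf{u}_j:\lambda\in[0,1]^{n_\text{in}}\}$ and the ``right'' parallelotope $\mathcal{P}(\mathbf{U}^R)=\{\mathbf{c}+r\mathbf{u}_1+\lambda_1(1-r)\mathbf{u}_1+\sum_{j\ge2}\lambda_j\mathbf{u}_j:\lambda\in[0,1]^{n_\text{in}}\}$, and let $\mathcal{P}(\mathbf{V}^L),\mathcal{P}(\mathbf{V}^R)$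 be their images under $\mathbf{x}\mapsto\mathbf{W}\mathbf{x}+\mathbf{b}$ (so $\mathbf{V}^L=\mathbf{W}\mathbf{U}^L$, $\mathbf{V}^R=\mathbf{W}\mathbf{U}^R$). Write $v_{j,i}$ for the $i$-th coordinate of $\mathbf{v}_j$ and $z_i=\sum_{j=2}^{n_\text{in}}|v_{j,i}|$. Then \[ V_\text{red}:=\mathrm{Vol}(\mathcal{B}(\mathbf{V}))-\mathrm{Vol}\big(\mathcal{B}(\mathbf{V}^L)\cup\mathcal{B}(\mathbf{V}^R)\big) =\sum_{k=2}^{n_\text{out}}\big(1-r^k-(1-r)^k\big)\sum_{C_i\in P_k(C)}\Big[\prod_{j\in C_i}|v_{1,j}|\Big]\prod_{t\in C\setminus C_i}z_t , \] where $C=\{1,\ldots,n_\text{out}\}$ and $P_k(C)$ is the set of subsets of $C$ with exactly $k$ elements.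
   Context: For a parallelotope $\mathcal{P}\subset\mathbb{R}^{n_\text{out}}$ (such as $\mathcal{P}(\mathbf{V})$), $\mathcal{B}(\cdot)$ denotes the smallest axis-aligned hyperrectangle containing it, i.e., the Cartesian product over coordinates $i$ of the interval between the minimal and maximal $i$-th coordinate of its vertices; $\mathrm{Vol}$ denotes $n_\text{out}$-dimensional Lebesgue volume. In particular $\mathrm{Vol}(\mathcal{B}(\mathbf{V}))=\prod_{i=1}^{n_\text{out}}\sum_{j=1}^{n_\text{in}}|v_{j,i}|$. *)

From HB Require Import structures.
From mathcomp Require Import all_boot all_order all_algebra.
From mathcomp Require Import all_classical all_reals.
From mathcomp Require Import ereal measure lebesgue_measure lebesgue_integral.
Set Implicit Arguments. Unset Strict Implicit. Unset Printing Implicit Defensive.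
Import Order.TTheory GRing.Theory Num.Theory.
Local Open Scope classical_set_scope.
Local Open Scope ring_scope.

Section Defs.
Variable R : realType.

Definition parallelotope (m k : nat) (c : 'cV[R]_m) (G : 'M[R]_(m, k)) : set 'cV[R]_m :=
  [set c + G *m lam | lam in [set lam : 'cV[R]_k | forall j, 0 <= lam j 0 <= 1]].

Definition affine_image (m n : nat) (W : 'M[R]_(n, m)) (b : 'cV[R]_n)
    (S : set 'cV[R]_m) : set 'cV[R]_n :=
  [set W *m x + b | x in S].

Definition bbox (n : nat) (S : set 'cV[R]_n) : set 'cV[R]_n :=
  [set x | forall i, inf [set y i 0 | y in S] <= x i 0 <= sup [set y i 0 | y in S]].

(* n-dimensional Lebesgue volume, as the iterated Lebesgue integral
   (Tonelli) of the slices: vol_0 S = 1 if S is nonempty, and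
   vol_(n+1) S = \int_R vol_n {y | (x;y) \in S} dx. *)
Fixpoint vol (n : nat) : set 'cV[R]_n -> \bar R :=
  match n with
  | 0 => fun S => if `[< S 0 >] then 1%E else 0%E
  | n'.+1 => fun S =>
      (\int[@lebesgue_measure R]_(x in setT)
         vol [set y : 'cV[R]_n' | S (col_mx (x%:M : 'cV[R]_1) y)])%E
  end.

End Defs.

(* Both bounding boxes are products of intervals: for the parallelotope
   c + G [0,1]^k the i-th side has length sum_j |G i j|.  Splitting along u_1
   replaces column 1 of V by r v_1 and (1 - r) v_1 (the right half also being
   shifted by r v_1); coordinatewise the two half-boxes then overlap in an
   interval of length z_i, so by inclusion-exclusion the union has volume
   prod_i (r a_i + z_i) + prod_i ((1 - r) a_i + z_i) - prod_i z_i, where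
   a_i = |v_(1,i)|.  Expanding prod_i (x a_i + z_i) in powers of x gives the
   formula.  Volumes of boxes and of unions of two boxes are computed by
   slicing along the first coordinate, as in the definition of vol. *)

From mathcomp Require Import all_boot all_order all_algebra.
From mathcomp Require Import all_classical all_reals.
From mathcomp Require Import ereal measure lebesgue_measure lebesgue_integral.
From mathcomp Require Import numfun.
From mathcomp Require Import ring lra.
Set Implicit Arguments. Unset Strict Implicit. Unset Printing Implicit Defensive.
Import Order.TTheory GRing.Theory Num.Theory.
Local Open Scope classical_set_scope.
Local Open Scope ring_scope.

Section MixedElementarySymmetric.
Variable R : comPzRingType.

Definition mixed_esym n (a z : 'I_n -> R) (k : nat) : R :=
  \sum_(C : {set 'I_n} | #|C| == k) (\prod_(j in C) a j) * \prod_(t in ~: C) z t.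

Lemma prod_affine_mixed_esym n (a z : 'I_n -> R) (x : R) :
  \prod_(i < n) (x * a i + z i) = \sum_(k < n.+1) x ^+ k * mixed_esym a z k.
Proof.
rewrite bigA_distr.
transitivity (\sum_(C : {set 'I_n})
                x ^+ #|C| * ((\prod_(j in C) a j) * \prod_(t in ~: C) z t)).
  apply: eq_bigr => C _; rewrite (bigID (mem C)) /= mulrA; congr (_ * _).
    by rewrite -prodr_const -big_split; apply: eq_bigr => i ->.
  by apply: eq_big => [i | i /negbTE Ci]; rewrite ?inE ?Ci.
under [RHS]eq_bigr do rewrite big_distrr.
rewrite (exchange_big_dep xpredT) //=; apply: eq_bigr => C _.
have ltCn : (#|C| < n.+1)%N by rewrite ltnS -[X in (_ <= X)%N]card_ord max_card.
by rewrite (big_pred1 (Ordinal ltCn)).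
Qed.

(* Evaluating the expansion at x = 1, r, 1 - r and 0: the coefficients of
   degree 0 and 1 cancel. *)
Lemma prod_split_defect n (a z : 'I_n -> R) (r : R) :
  \prod_(i < n) (a i + z i)
    - (\prod_(i < n) (r * a i + z i) + \prod_(i < n) ((1 - r) * a i + z i)
       - \prod_(i < n) z i)
  = \sum_(2 <= k < n.+1) (1 - r ^+ k - (1 - r) ^+ k) * mixed_esym a z k.
Proof.
have at1 : \prod_(i < n) (a i + z i) = \prod_(i < n) (1 * a i + z i).
  by apply: eq_bigr => i _; rewrite mul1r.
have at0 : \prod_(i < n) z i = \prod_(i < n) (0 * a i + z i).
  by apply: eq_bigr => i _; rewrite mul0r add0r.
rewrite at1 at0 !prod_affine_mixed_esym -big_split -!sumrB.
rewrite big_geq_mkord [RHS]big_mkcond; apply: eq_bigr => -[[|[|k]] _] _ /=.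
- by rewrite !expr0; ring.
- by rewrite !expr1; ring.
- by rewrite expr1n expr0n mul0r subr0 !mulrBl opprD addrA.
Qed.

End MixedElementarySymmetric.

Section BoxVolume.
Variable R : realType.
Implicit Types (a b c : R).

Definition box n (lo hi : 'I_n -> R) : set 'cV[R]_n :=
  [set y | forall i, lo i <= y i 0 <= hi i].

Definition boxvol n (lo hi : 'I_n -> R) : R := \prod_(i < n) Num.max 0 (hi i - lo i).

Lemma box_col_mx n (lo hi : 'I_n.+1 -> R) (x : R) (y : 'cV[R]_n) :
  box lo hi (col_mx (x%:M : 'cV[R]_1) y) <->
  lo ord0 <= x <= hi ord0 /\ box (lo \o lift ord0) (hi \o lift ord0) y.
Proof.
have head : col_mx (x%:M : 'cV[R]_1) y ord0 0 = x.
  rewrite (_ : ord0 = lshift n (ord0 : 'I_1)); last exact: val_inj.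
  by rewrite col_mxEu mxE eqxx mulr1n.
have tail i : col_mx (x%:M : 'cV[R]_1) y (lift ord0 i) 0 = y i 0.
  by rewrite (_ : lift ord0 i = rshift 1 i) ?col_mxEd //; apply: val_inj.
split=> [inb | [x_in y_in] i].
  by split=> [|i]; [rewrite -head | rewrite -tail]; apply: inb.
by case: (unliftP ord0 i) => [j -> | ->]; rewrite ?tail ?head //; apply: y_in.
Qed.

Lemma integral_indic_itvZ a b c :
  (\int[@lebesgue_measure R]_(x in setT) (c * \1_`[a, b] x)%:E
   = (c * Num.max 0 (b - a))%:E)%E.
Proof.
under eq_integral do rewrite EFinM.
rewrite integralZl //; last exact: (@integrable_indic_itv R a b true false).
rewrite integral_indic // setIT.
have := @lebesgue_measure_itv R `[a, b]; rewrite /= => ->; rewrite lte_fin.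
case: leP => [ba | ab]; first by rewrite mule0 max_l ?mulr0 // subr_le0.
by rewrite -EFinD -EFinM max_r // subr_ge0 ltW.
Qed.

Lemma integrable_indic_itvZ a b c :
  (@lebesgue_measure R).-integrable setT (EFin \o (fun x => c * \1_`[a, b] x)).
Proof.
have -> : EFin \o (fun x => c * \1_`[a, b] x) =
          (fun x => c%:E * (EFin \o \1_`[a, b]) x)%E.
  by apply/funext => x /=; rewrite EFinM.
by apply: integrableZl => //; exact: (@integrable_indic_itv R a b true false).
Qed.

Lemma integral_indic_itv_incl_excl a1 b1 c1 a2 b2 c2 a3 b3 c3 :
  (\int[@lebesgue_measure R]_(x in setT)
     ((c1 * \1_`[a1, b1] x + c2 * \1_`[a2, b2] x)%:E - (c3 * \1_`[a3, b3] x)%:E)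
   = (c1 * Num.max 0 (b1 - a1) + c2 * Num.max 0 (b2 - a2)
      - c3 * Num.max 0 (b3 - a3))%:E)%E.
Proof.
have int_sum : (@lebesgue_measure R).-integrable setT
    (EFin \o (fun x => c1 * \1_`[a1, b1] x + c2 * \1_`[a2, b2] x)).
  rewrite (_ : EFin \o _ = (EFin \o (fun x => c1 * \1_`[a1, b1] x)%R)
                           \+ (EFin \o (fun x => c2 * \1_`[a2, b2] x)%R))%E.
    by apply: integrableD => //; exact: integrable_indic_itvZ.
  by apply/funext => x /=; rewrite EFinD.
rewrite integralB_EFin //; last exact: integrable_indic_itvZ.
under eq_integral do rewrite EFinD.
rewrite integralD_EFin //; try exact: integrable_indic_itvZ.
by rewrite !integral_indic_itvZ -EFinD.
Qed.

Lemma indic_itvE a b x : \1_`[a, b] x = ((a <= x <= b)%R)%:R :> R.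
Proof. by rewrite indicE mem_setE in_itv. Qed.

(* The boolean guards make the family closed under taking slices, and also
   encode the empty set in dimension 0. *)
Lemma vol_guarded_boxU n (e1 e2 : bool) (lo1 hi1 lo2 hi2 : 'I_n -> R) :
  vol [set y | e1 /\ box lo1 hi1 y \/ e2 /\ box lo2 hi2 y] =
  (e1%:R * boxvol lo1 hi1 + e2%:R * boxvol lo2 hi2
   - (e1 && e2)%:R * boxvol (lo1 \max lo2) (hi1 \min hi2))%:E.
Proof.
elim: n e1 e2 lo1 hi1 lo2 hi2 => [|n IHn] e1 e2 lo1 hi1 lo2 hi2.
  have box0 lo hi (y : 'cV[R]_0) : box lo hi y by move=> [].
  rewrite /= /boxvol !big_ord0 !mulr1.
  case: e1; case: e2 => /=.
  - by rewrite asboolT; [congr (_%:E); ring | left; split => //; apply: box0].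
  - by rewrite asboolT; [congr (_%:E); ring | left; split => //; apply: box0].
  - by rewrite asboolT; [congr (_%:E); ring | right; split => //; apply: box0].
  - by rewrite asboolF; [congr (_%:E); ring | case=> -[]].
set tl := fun f : 'I_n.+1 -> R => f \o lift ord0.
set A := Num.max (lo1 ord0) (lo2 ord0); set B := Num.min (hi1 ord0) (hi2 ord0).
have guards x : (e1 && (lo1 ord0 <= x <= hi1 ord0)) && (e2 && (lo2 ord0 <= x <= hi2 ord0))
                = (e1 && e2) && (A <= x <= B).
  rewrite ge_max le_min.
  by case: e1; case: e2; case: (lo1 _ <= x); case: (lo2 _ <= x);
     case: (x <= hi1 _); case: (x <= hi2 _).
have slice x : [set y | e1 /\ box lo1 hi1 (col_mx (x%:M : 'cV[R]_1) y)
                     \/ e2 /\ box lo2 hi2 (col_mx (x%:M : 'cV[R]_1) y)] =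
    [set y | (e1 && (lo1 ord0 <= x <= hi1 ord0)) /\ box (tl lo1) (tl hi1) y
          \/ (e2 && (lo2 ord0 <= x <= hi2 ord0)) /\ box (tl lo2) (tl hi2) y].
  apply/funext => y /=; apply/propext; rewrite !box_col_mx.
  by split=> [[] [-> [-> ?]] | [] [/andP[-> ?] ?]]; [left | right | left | right].
rewrite /=; transitivity (\int[@lebesgue_measure R]_(x in setT)
  ((e1%:R * boxvol (tl lo1) (tl hi1) * \1_`[lo1 ord0, hi1 ord0] x
    + e2%:R * boxvol (tl lo2) (tl hi2) * \1_`[lo2 ord0, hi2 ord0] x)%:E
   - ((e1 && e2)%:R * boxvol (tl lo1 \max tl lo2) (tl hi1 \min tl hi2)
      * \1_`[A, B] x)%:E))%E.
  apply: eq_integral => x _; rewrite slice IHn guards -EFinB !indic_itvE.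
  by rewrite -!mulnb !natrM; congr (_%:E); ring.
rewrite integral_indic_itv_incl_excl; congr (_%:E).
by rewrite /boxvol !big_ord_recl /=; ring.
Qed.

Lemma vol_box n (lo hi : 'I_n -> R) : vol (box lo hi) = (boxvol lo hi)%:E.
Proof.
rewrite (_ : box lo hi = [set y | true /\ box lo hi y \/ false /\ box lo hi y]).
  by rewrite vol_guarded_boxU mul1r !mul0r addr0 subr0.
by apply/funext => y; apply/propext; split=> [|[] []]; [left|..].
Qed.

Lemma vol_boxU n (lo1 hi1 lo2 hi2 : 'I_n -> R) :
  vol (box lo1 hi1 `|` box lo2 hi2) =
  (boxvol lo1 hi1 + boxvol lo2 hi2 - boxvol (lo1 \max lo2) (hi1 \min hi2))%:E.
Proof.
rewrite (_ : _ `|` _ = [set y | true /\ box lo1 hi1 y \/ true /\ box lo2 hi2 y]).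
  by rewrite vol_guarded_boxU !mul1r.
by apply/funext => y; apply/propext; split=> [[]|[] []]; by [left | right].
Qed.

End BoxVolume.

Section ScaleColumn.
Variable R : comPzRingType.

Definition scalecol m k (j0 : 'I_k) (a : R) (G : 'M[R]_(m, k)) : 'M[R]_(m, k) :=
  \matrix_(i, j) (if j == j0 then a * G i j else G i j).

Lemma mulmx_scalecol n m k (W : 'M[R]_(n, m)) (G : 'M[R]_(m, k)) j0 a :
  W *m scalecol j0 a G = scalecol j0 a (W *m G).
Proof.
apply/matrixP => i j; rewrite !mxE; case: ifP => j_j0.
  by rewrite mulr_sumr; apply: eq_bigr => l _; rewrite mxE j_j0 mulrCA.
by apply: eq_bigr => l _; rewrite mxE j_j0.
Qed.

Lemma mulmx_col n m k (W : 'M[R]_(n, m)) (G : 'M[R]_(m, k)) j :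
  W *m col j G = col j (W *m G).
Proof. by rewrite !colE mulmxA. Qed.

Lemma sum_scalecol m k (G : 'M[R]_(m, k)) j0 a (f : R -> R) i :
  \sum_j f (scalecol j0 a G i j) = f (a * G i j0) + \sum_(j | j != j0) f (G i j).
Proof.
rewrite (bigD1 j0) //= !mxE eqxx; congr (_ + _).
by apply: eq_bigr => j /negbTE j_neq; rewrite mxE j_neq.
Qed.

End ScaleColumn.

Section ParallelotopeBoundingBox.
Variable R : realType.

Definition unit_cube {k : nat} : set 'cV[R]_k := [set lam | forall j, 0 <= lam j 0 <= 1].

Lemma sup_attained (S : set R) M : S M -> ubound S M -> sup S = M.
Proof.
move=> SM ubM; apply/le_anti/andP; split; first by apply: ge_sup => //; exists M.
by apply: (ub_le_sup _ SM); exists M.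
Qed.

Lemma inf_attained (S : set R) M : S M -> lbound S M -> inf S = M.
Proof.
move=> SM lbM; apply/le_anti/andP; split; last by apply: lb_le_inf => //; exists M.
by apply: (ge_inf _ SM); exists M.
Qed.

Lemma sup_linear_unit_cube k (K : R) (d : 'I_k -> R) :
  sup [set K + \sum_j d j * lam j 0 | lam in unit_cube]
  = K + \sum_j Num.max 0 (d j).
Proof.
apply: sup_attained.
  exists (\col_j ((0 < d j)%R)%:R) => [j | ]; rewrite ?mxE.
    by case: ltP; rewrite /= ?lexx ?ler01.
  congr (_ + _); apply: eq_bigr => j _; rewrite mxE.
  by case: ltP => d_j /=; rewrite ?mulr1 ?mulr0 ?max_r ?max_l // ltW.
move=> _ [lam lam_cube <-]; rewrite lerD2l; apply: ler_sum => j _.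
have /andP[lam_ge0 lam_le1] := lam_cube j.
by case: (leP 0 (d j)) => d_j; nra.
Qed.

Lemma inf_linear_unit_cube k (K : R) (d : 'I_k -> R) :
  inf [set K + \sum_j d j * lam j 0 | lam in unit_cube]
  = K + \sum_j Num.min 0 (d j).
Proof.
apply: inf_attained.
  exists (\col_j ((d j < 0)%R)%:R) => [j | ]; rewrite ?mxE.
    by case: ltP; rewrite /= ?lexx ?ler01.
  congr (_ + _); apply: eq_bigr => j _; rewrite mxE.
  by case: ltP => d_j /=; rewrite ?mulr1 ?mulr0 ?min_r ?min_l // ltW.
move=> _ [lam lam_cube <-]; rewrite lerD2l; apply: ler_sum => j _.
have /andP[lam_ge0 lam_le1] := lam_cube j.
by case: (leP 0 (d j)) => d_j; nra.
Qed.

Definition bbox_lo m k (c : 'cV[R]_m) (G : 'M[R]_(m, k)) (i : 'I_m) : R :=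
  c i 0 + \sum_j Num.min 0 (G i j).

Definition bbox_hi m k (c : 'cV[R]_m) (G : 'M[R]_(m, k)) (i : 'I_m) : R :=
  c i 0 + \sum_j Num.max 0 (G i j).

Lemma bbox_parallelotope m k (c : 'cV[R]_m) (G : 'M[R]_(m, k)) :
  bbox (parallelotope c G) = box (bbox_lo c G) (bbox_hi c G).
Proof.
have coord i : [set y i 0 | y in parallelotope c G] =
               [set c i 0 + \sum_j G i j * lam j 0 | lam in unit_cube].
  rewrite /parallelotope !image_comp; apply: eq_imagel => lam _ /=.
  by rewrite !mxE.
apply/funext => y; apply/propext; split=> y_in i; have := y_in i;
  by rewrite coord sup_linear_unit_cube inf_linear_unit_cube.
Qed.

Lemma max0_sub_min0 (x : R) : Num.max 0 x - Num.min 0 x = `|x|.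
Proof. by case: (leP 0 x) => x0; [rewrite subr0 ger0_norm | rewrite sub0r ltr0_norm]. Qed.

Lemma boxvol_bbox_parallelotope m k (c : 'cV[R]_m) (G : 'M[R]_(m, k)) :
  boxvol (bbox_lo c G) (bbox_hi c G) = \prod_i \sum_j `|G i j|.
Proof.
apply: eq_bigr => i _; rewrite /bbox_lo /bbox_hi opprD addrACA subrr add0r -sumrB.
under eq_bigr do rewrite max0_sub_min0.
by rewrite max_r // sumr_ge0.
Qed.

Lemma affine_image_parallelotope n m k (W : 'M[R]_(n, m)) (b : 'cV[R]_n)
    (c : 'cV[R]_m) (G : 'M[R]_(m, k)) :
  affine_image W b (parallelotope c G) = parallelotope (W *m c + b) (W *m G).
Proof.
rewrite /affine_image /parallelotope /=.
rewrite (image_comp (fun lam => c + G *m lam) (fun x => W *m x + b)).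
apply: eq_imagel => lam _ /=.
by rewrite mulmxDr mulmxA addrAC.
Qed.

Lemma parallelotope_scalecol m k (c : 'cV[R]_m) (G : 'M[R]_(m, k)) j0 a :
  [set c + (lam j0 0 * a) *: col j0 G + \sum_(j < k | j != j0) lam j 0 *: col j G
  | lam in unit_cube] = parallelotope c (scalecol j0 a G).
Proof.
rewrite /parallelotope; apply: eq_imagel => lam _ /=.
rewrite -addrA; congr (_ + _); apply/matrixP => i l.
rewrite (ord1 l) !mxE summxE [RHS](bigD1 j0) //= mxE eqxx; congr (_ + _).
  by rewrite [RHS]mulrC mulrA.
by apply: eq_bigr => j /negbTE j_neq; rewrite !mxE j_neq mulrC.
Qed.

(* Coordinatewise the two halves are [K + min(0,t), K + max(0,t)] + [m, M] and
   [K + min(t,s), K + max(t,s)] + [m, M] with t = r s between 0 and s, so they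
   overlap exactly in K + t + [m, M]. *)
Lemma split_interval_overlap (K s m M r : R) : 0 <= r <= 1 -> m <= M ->
  Num.min (K + (Num.max 0 (r * s) + M)) (K + r * s + (Num.max 0 ((1 - r) * s) + M))
  - Num.max (K + (Num.min 0 (r * s) + m)) (K + r * s + (Num.min 0 ((1 - r) * s) + m))
  = M - m.
Proof.
move=> /andP[r0 r1] mM; case: (leP 0 s) => s0.
  have rs0 : 0 <= r * s by nra.
  have rs1 : 0 <= (1 - r) * s by nra.
  by rewrite (max_r rs0) (min_l rs0) (max_r rs1) (min_l rs1) min_l ?max_r;
    [ring | nra | nra].
have rs0 : r * s <= 0 by nra.
have rs1 : (1 - r) * s <= 0 by nra.
by rewrite (max_l rs0) (min_r rs0) (max_l rs1) (min_r rs1) min_r ?max_l;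
  [ring | nra | nra].
Qed.

Lemma boxvol_split_overlap m k (c : 'cV[R]_m) (G : 'M[R]_(m, k)) j0 r :
  0 <= r <= 1 ->
  boxvol (bbox_lo c (scalecol j0 r G)
            \max bbox_lo (c + r *: col j0 G) (scalecol j0 (1 - r) G))
         (bbox_hi c (scalecol j0 r G)
            \min bbox_hi (c + r *: col j0 G) (scalecol j0 (1 - r) G))
  = \prod_i \sum_(j | j != j0) `|G i j|.
Proof.
move=> r01; apply: eq_bigr => i _ /=.
rewrite /bbox_lo /bbox_hi !sum_scalecol !mxE split_interval_overlap //; last first.
  by apply: ler_sum => j _; rewrite ge_min !le_max lexx.
rewrite -sumrB (eq_bigr _ (fun j _ => max0_sub_min0 (G i j))).
by rewrite max_r // sumr_ge0.
Qed.

End ParallelotopeBoundingBox.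

Theorem lemma1 (R : realType) (nin nout : nat) (hin : (0 < nin)%N) (hout : (0 < nout)%N)
  (W : 'M[R]_(nout, nin)) (b : 'cV[R]_nout) (c : 'cV[R]_nin) (U : 'M[R]_nin)
  (r : R) (hr0 : 0 <= r) (hr1 : r <= 1) :
  let j1 : 'I_nin := Ordinal hin in
  let u1 : 'cV[R]_nin := col j1 U in
  let PU := parallelotope c U in
  let PUL := [set c + (lam j1 0 * r) *: u1
                 + \sum_(j < nin | j != j1) lam j 0 *: col j U
             | lam in [set lam : 'cV[R]_nin | forall j, 0 <= lam j 0 <= 1]] in
  let PUR := [set c + r *: u1 + (lam j1 0 * (1 - r)) *: u1
                 + \sum_(j < nin | j != j1) lam j 0 *: col j U
             | lam in [set lam : 'cV[R]_nin | forall j, 0 <= lam j 0 <= 1]] in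
  let PV := affine_image W b PU in
  let PVL := affine_image W b PUL in
  let PVR := affine_image W b PUR in
  let V := W *m U in
  let z (t : 'I_nout) := \sum_(j < nin | j != j1) `|V t j| in
  (vol (bbox PV) - vol (bbox PVL `|` bbox PVR))%E =
  (\sum_(2 <= k < nout.+1)
     (1 - r ^+ k - (1 - r) ^+ k) *
     \sum_(Ci : {set 'I_nout} | #|Ci| == k)
        (\prod_(j in Ci) `|V j j1|) * \prod_(t in ~: Ci) z t)%:E.
Proof.
move=> j1 u1 PU PUL PUR PV PVL PVR V z.
have r01 : 0 <= r <= 1 by rewrite hr0 hr1.
have shift : W *m (c + r *: u1) + b = W *m c + b + r *: col j1 V.
  by rewrite mulmxDr -scalemxAr mulmx_col addrAC.
rewrite /PV /PVL /PVR /PUL /PUR /PU /u1 !parallelotope_scalecol.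
rewrite !affine_image_parallelotope !mulmx_scalecol shift -/V.
rewrite !bbox_parallelotope vol_box vol_boxU -EFinB boxvol_split_overlap //.
rewrite !boxvol_bbox_parallelotope; congr (_%:E).
have split_col a : 0 <= a ->
    \prod_i \sum_j `|scalecol j1 a V i j| = \prod_i (a * `|V i j1| + z i).
  by move=> a_ge0; apply: eq_bigr => i _; rewrite sum_scalecol normrM ger0_norm.
rewrite !split_col ?subr_ge0 // (eq_bigr (fun i => `|V i j1| + z i)); last first.
  by move=> i _; rewrite (bigD1 j1).
exact: prod_split_defect.
Qed.
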